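(* Let $f\ge 0$, $n=3f+1$, and let nodes $v_0,\dots,v_{n-1}$ be given, of which exactly $f$ are byzantine and the remaining $2f+1$ honest. Let the creator of round $r\in\mathbb{Z}_{\ge 0}$ be $v_{r\bmod n}$. Then among any $n+2$ consecutive rounds there exist three consecutive rounds whose creators are all honest. *)

From mathcomp Require Import all_boot.
Set Implicit Arguments. Unset Strict Implicit. Unset Printing Implicit Defensive.

(* Nodes v_0..v_{n-1} are the elements of 'I_n (n > 0).
   The creator of round r is v_(r mod n). *)
Definition creator (n : nat) (r : nat) : 'I_n.+1 := inord (r %% n.+1).

(* Every n+1 consecutive rounds have each node as creator exactly once, so
   summing over the n+1 windows {r, r+1, r+2} starting in such a block counts
   every byzantine node three times.  With f byzantine nodes among n = 3f+1,
   the windows meet the byzantine nodes at most 3f < n times in total, hence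
   some window has only honest creators. *)
From mathcomp Require Import all_boot.
From mathcomp Require Import zify.

Lemma creator_shift_inj (n t : nat) :
  injective (fun k : 'I_n.+1 => creator n (t + k)).
Proof.
move=> a b /(congr1 val); rewrite /= !inordK ?ltn_pmod // => /eqP.
by rewrite eqn_modDl !modn_small // => /eqP /val_inj.
Qed.

Lemma sum_creator_shift (n t : nat) (F : 'I_n.+1 -> nat) :
  \sum_(k < n.+1) F (creator n (t + k)) = \sum_(i < n.+1) F i.
Proof. by rewrite [RHS](reindex_inj (creator_shift_inj n t)). Qed.

Lemma count_creator_shift (n t : nat) (A : {set 'I_n.+1}) :
  \sum_(k < n.+1) (creator n (t + k) \in A) = #|A|.
Proof.
rewrite (sum_creator_shift n t (fun i => nat_of_bool (i \in A))).
by rewrite -big_mkcond sum1_card.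
Qed.

Lemma exists_window_avoiding (n : nat) (A : {set 'I_n.+1}) (s : nat) :
  3 * #|A| < n.+1 ->
  exists k : 'I_n.+1, [/\ creator n (s + k) \notin A,
    creator n (s + k + 1) \notin A & creator n (s + k + 2) \notin A].
Proof.
move=> small_A.
pose avoids (k : 'I_n.+1) := [&& creator n (s + k) \notin A,
  creator n (s + k + 1) \notin A & creator n (s + k + 2) \notin A].
have [k /and3P [] | none] := pickP avoids; first by exists k.
suff : n.+1 <= 3 * #|A| by rewrite leqNgt small_A.
have hit (k : 'I_n.+1) : 1 <= (creator n (s + k) \in A)
    + (creator n (s + 1 + k) \in A) + (creator n (s + 2 + k) \in A).
  move: (none k); rewrite /avoids (addnAC s 1) (addnAC s 2).
  by do 3 case: (_ \in A).
have := leq_sum (index_enum _) (fun (k : 'I_n.+1) (_ : true) => hit k).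
by rewrite sum1_card card_ord !big_split /= !count_creator_shift; lia.
Qed.

Theorem lemma12 (f : nat) (byz : {set 'I_(3 * f).+1}) :
  #|byz| = f ->
  forall s : nat,
  exists k : nat, k + 2 <= (3 * f).+1 + 1 /\
    [/\ creator (3 * f) (s + k) \notin byz,
        creator (3 * f) (s + k + 1) \notin byz &
        creator (3 * f) (s + k + 2) \notin byz].
Proof.
move=> card_byz s.
have [|k avoid] := exists_window_avoiding _ byz s; first by rewrite card_byz.
by exists k; split=> //; have := ltn_ord k; lia.
Qed.
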